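(* Let $G=(X,\Sigma,\longrightarrow,X_0)$ and $R=(Z,\Sigma,\longrightarrow,Z_0)$ be automata, $E$ a $\Sigma_{ucr}$-controllability set from $G$ to $R$, and $\mathcal{A}(E)=(E^*,\Sigma,\longrightarrow,I_E)$. Then for any $s\in\Sigma^*$, $W_0\in I_E$ and $W\in E^*$, if $W_0\xrightarrow{s}W$ in $\mathcal{A}(E)$ then $\pi_G(W)=\mathit{Reach}(s,X_0)$, where $\pi_G(W)=\{x\in X:(x,z)\in W\text{ for some }z\in Z\}$ and $\mathit{Reach}(s,X_0)=\{x\in X:x_0\xrightarrow{s}x\text{ for some }x_0\in X_0\}$.
   Context: An automaton is a 4-tuple $A=(Q,\Sigma,\longrightarrow,Q_0)$ with state set $Q$, finite event set $\Sigma$, ${\longrightarrow}\subseteq Q\times\Sigma\times Q$ and $\emptyset\neq Q_0\subseteq Q$; write $q\xrightarrow{\sigma}q'$ for $(q,\sigma,q')\in{\longrightarrow}$, extended to strings $s\in\Sigma^*$ in the usual way. Events are partitioned into uncontrollable $\Sigma_{uc}$ and controllable $\Sigma_c$; $\Sigma_r\subseteq\Sigma$ is a fixed set of required events. For $W,W'\subseteq X\times Z$, $\sigma\in\Sigma$: $\mathit{match}_{G,R}(W,\sigma,W')$ iff for all $(x,z)\in W$ and $x\xrightarrow{\sigma}x'$ there is $z'$ with $z\xrightarrow{\sigma}z'$ and $(x',z')\in W'$. $E\subseteq\wp(X\times Z)$ is a $\Sigma_{ucr}$-controllability set from $G$ to $R$ if: (istate) some $W_0\in E$ satisfies $\forall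 x_0\in X_0\,\exists z_0\in Z_0\,((x_0,z_0)\in W_0)$; (a) for every $W\in E$, $\sigma\in\Sigma_{uc}$ there is $W'\in E$ with $\mathit{match}_{G,R}(W,\sigma,W')$; (b) for every $W\in E$, $(x,z)\in W$, $\sigma\in\Sigma_r$, $z\xrightarrow{\sigma}z'$, there exist $x'$ and $W'\in E$ with $x\xrightarrow{\sigma}x'$, $(x',z')\in W'$, $\mathit{match}_{G,R}(W,\sigma,W')$. For such $E$, $E^*=\bigcup_{\widetilde W\in E}\wp(\widetilde W)$, $\mathrm{Succ}_\sigma(W)=\bigcup_{(x,z)\in W}\{x':x\xrightarrow{\sigma}x'\}\times\{z':z\xrightarrow{\sigma}z'\}$, and $\mathcal{A}(E)=(E^*,\Sigma,\longrightarrow,I_E)$ with $I_E=\{W_0\in E^*:\forall x_0\in X_0\,\exists z_0\in Z_0\,((x_0,z_0)\in W_0)\text{ and }W_0\subseteq X_0\times Z_0\}$ and $W\xrightarrow{\sigma}W'$ iff (i) there exist $(x,z)\in W$, $(x',z')\in W'$ with $x\xrightarrow{\sigma}x'$, $z\xrightarrow{\sigma}z'$; (ii) $\mathit{match}_{G,R}(W,\sigma,W')$; (iii) $W'\subseteq\mathrm{Succ}_\sigma(W)$. *)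

From mathcomp Require Import all_boot.
Set Implicit Arguments. Unset Strict Implicit. Unset Printing Implicit Defensive.

(* An automaton (Q, Sigma, -->, Q0). Nonemptiness of Q0 is part of the
   definition in the paper; it is recorded as a field. *)
Record automaton (Q : Type) (S : finType) := Automaton {
  trans : Q -> S -> Q -> Prop;
  init : Q -> Prop;
  init_nonempty : exists q, init q }.

Fixpoint trans_str (Q : Type) (S : finType) (A : automaton Q S)
    (q : Q) (s : seq S) (q' : Q) : Prop :=
  match s with
  | [::] => q = q'
  | a :: s' => exists q1, trans A q a q1 /\ trans_str A q1 s' q'
  end.

Section Ctrl.
Variables (S : finType) (X Z : Type) (G : automaton X S) (R : automaton Z S).

Definition match_GR (W : X -> Z -> Prop) (a : S) (W' : X -> Z -> Prop) : Prop :=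
  forall x z, W x z -> forall x', trans G x a x' ->
    exists z', trans R z a z' /\ W' x' z'.

Definition covers_init (W0 : X -> Z -> Prop) : Prop :=
  forall x0, init G x0 -> exists z0, init R z0 /\ W0 x0 z0.

(* E is a Sigma_ucr-controllability set from G to R, where Suc is the set of
   uncontrollable events (Sigma_c is its complement) and Sr the required events *)
Definition controllability_set (Suc Sr : pred S)
    (E : (X -> Z -> Prop) -> Prop) : Prop :=
  (exists W0, E W0 /\ covers_init W0) /\
  (forall W, E W -> forall a, Suc a -> exists W', E W' /\ match_GR W a W') /\
  (forall W, E W -> forall x z, W x z -> forall a, Sr a ->
     forall z', trans R z a z' ->
       exists x' W', trans G x a x' /\ E W' /\ W' x' z' /\ match_GR W a W').

Definition Estar (E : (X -> Z -> Prop) -> Prop) (W : X -> Z -> Prop) : Prop :=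
  exists Wt, E Wt /\ (forall x z, W x z -> Wt x z).

Definition Estate (E : (X -> Z -> Prop) -> Prop) := {W : X -> Z -> Prop | Estar E W}.

Definition Succ (W : X -> Z -> Prop) (a : S) (x' : X) (z' : Z) : Prop :=
  exists x z, W x z /\ trans G x a x' /\ trans R z a z'.

Definition AE_trans (E : (X -> Z -> Prop) -> Prop) (W : Estate E) (a : S)
    (W' : Estate E) : Prop :=
  (exists x z x' z', proj1_sig W x z /\ proj1_sig W' x' z' /\
      trans G x a x' /\ trans R z a z') /\
  match_GR (proj1_sig W) a (proj1_sig W') /\
  (forall x' z', proj1_sig W' x' z' -> Succ (proj1_sig W) a x' z').

Definition AE_init (E : (X -> Z -> Prop) -> Prop) (W0 : Estate E) : Prop :=
  covers_init (proj1_sig W0) /\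
  (forall x z, proj1_sig W0 x z -> init G x /\ init R z).

Definition piG (W : X -> Z -> Prop) (x : X) : Prop := exists z, W x z.

Definition Reach (s : seq S) (x : X) : Prop :=
  exists x0, init G x0 /\ trans_str G x0 s x.

End Ctrl.

(* The transition relation of A(E) along a string s, from W0 to W
   (I_E may be empty, so A(E) is not packaged as an [automaton] record). *)
Definition AE_trans_str (S : finType) (X Z : Type) (G : automaton X S)
    (R : automaton Z S) (E : (X -> Z -> Prop) -> Prop) :
    Estate E -> seq S -> Estate E -> Prop :=
  fix f W s W' := match s with
  | [::] => W = W'
  | a :: s' => exists W1, AE_trans G R W a W1 /\ f W1 s' W'
  end.

(* Conditions (ii) and (iii) of a transition W --a--> W' of A(E) say exactly
   that pi_G(W') is the a-successor set of pi_G(W): (iii) gives inclusion, the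
   matching condition (ii) the converse.  Since states of I_E project onto X_0,
   induction on s yields pi_G(W) = Reach(s, X_0). *)
From Corelib Require Import Setoid.
From mathcomp Require Import all_boot.

Set Implicit Arguments.
Unset Strict Implicit.
Unset Printing Implicit Defensive.

Section ReachableImage.
Variables (S : finType) (Q : Type) (A : automaton Q S).

Definition post (P : Q -> Prop) (s : seq S) (q : Q) : Prop :=
  exists q0, P q0 /\ trans_str A q0 s q.

Lemma post_nil (P : Q -> Prop) (q : Q) : post P [::] q <-> P q.
Proof. by split=> [[q0 [Pq0 <-]] | Pq]; last by exists q. Qed.

Lemma post1 (P : Q -> Prop) (a : S) (q : Q) :
  post P [:: a] q <-> exists2 q0, P q0 & trans A q0 a q.
Proof.
split=> [[q0 [Pq0 [q1 [a01 q1q]]]] | [q0 Pq0 a0q]].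
- by subst q1; exists q0.
- by exists q0; split=> //; exists q.
Qed.

Lemma post_cons (P : Q -> Prop) (a : S) (s : seq S) (q : Q) :
  post P (a :: s) q <-> post (post P [:: a]) s q.
Proof.
split=> [[q0 [Pq0 [q1 [a01 s1]]]] | [q1 [/post1 [q0 Pq0 a01] s1]]].
- by exists q1; split=> //; apply/post1; exists q0.
- by exists q0; split=> //; exists q1.
Qed.

Lemma post_ext (P P' : Q -> Prop) :
  (forall q, P q <-> P' q) -> forall s q, post P s q <-> post P' s q.
Proof. by move=> PP' s q; split=> [[q0 [/PP' ? ?]] | [q0 [/PP' ? ?]]]; exists q0. Qed.

End ReachableImage.

Section ProjectionOfAE.
Variables (S : finType) (X Z : Type) (G : automaton X S) (R : automaton Z S).
Variable E : (X -> Z -> Prop) -> Prop.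

Lemma piG_AE_trans (W W' : Estate E) (a : S) :
  AE_trans G R W a W' ->
  forall x, piG (proj1_sig W') x <-> post G (piG (proj1_sig W)) [:: a] x.
Proof.
move=> [_ [matchWW' succW']] x; rewrite post1; split.
- move=> [z' /succW' [x0 [z0 [Wx0z0 [x0x _]]]]].
  by exists x0; first exists z0.
- move=> [x0 [z0 Wx0z0] x0x].
  by have [z' [_ W'xz']] := matchWW' _ _ Wx0z0 _ x0x; exists z'.
Qed.

Lemma piG_AE_trans_str (s : seq S) (W0 W : Estate E) :
  AE_trans_str G R W0 s W ->
  forall x, piG (proj1_sig W) x <-> post G (piG (proj1_sig W0)) s x.
Proof.
elim: s W0 => [|a s IHs] W0 /=.
  by move=> <- x; rewrite post_nil.
move=> [W1 [W0W1 W1W]] x.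
rewrite post_cons (IHs _ W1W).
exact: (post_ext G (piG_AE_trans W0W1) s x).
Qed.

Lemma piG_AE_init (W0 : Estate E) :
  AE_init G R W0 -> forall x, piG (proj1_sig W0) x <-> init G x.
Proof.
move=> [coverW0 W0init] x; split=> [[z /W0init []] // | /coverW0 [z [_ W0xz]]].
by exists z.
Qed.

End ProjectionOfAE.

Theorem lemma2 (S : finType) (X Z : Type) (G : automaton X S)
    (R : automaton Z S) (Suc Sr : pred S) (E : (X -> Z -> Prop) -> Prop)
    (HE : controllability_set G R Suc Sr E)
    (s : seq S) (W0 W : Estate E) :
  AE_init G R W0 -> AE_trans_str G R W0 s W ->
  forall x : X, piG (proj1_sig W) x <-> Reach G s x.
Proof.
move=> initW0 W0W x.
rewrite (piG_AE_trans_str W0W).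
exact: (post_ext G (piG_AE_init initW0) s x).
Qed.
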